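(* Let $r\ge 2$ and let $G$ be an $r$-regular graph of order $n$ with $\mathrm{LIP}(G)=k$. Then $k\le \frac{rn-2}{2r-2}$.
   Context: All graphs are finite and simple. For a graph $G$, $\mathrm{LIP}(G)$ denotes the number of vertices of a longest induced path in $G$. The order of a graph is its number of vertices. *)

From mathcomp Require Import all_boot.
Set Implicit Arguments. Unset Strict Implicit. Unset Printing Implicit Defensive.

Definition simple_graph (T : finType) (e : rel T) : Prop :=
  symmetric e /\ irreflexive e.

Definition regular (T : finType) (e : rel T) (r : nat) : Prop :=
  forall v : T, #|[set w | e v w]| = r.

(* The vertex sequence s is an induced path of G: its vertices are pairwise
   distinct, and two vertices of s are adjacent iff they are consecutive in s.
   (The default element x0 of nth is irrelevant since indices are in range.) *)
Definition induced_path (T : finType) (e : rel T) (s : seq T) : Prop :=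
  uniq s /\
  forall (x0 : T) (i j : nat), i < size s -> j < size s ->
    e (nth x0 s i) (nth x0 s j) = (i.+1 == j) || (j.+1 == i).

Definition is_LIP (T : finType) (e : rel T) (k : nat) : Prop :=
  (exists s : seq T, induced_path e s /\ size s = k) /\
  (forall s : seq T, induced_path e s -> size s <= k).

(* Let [S] be the vertex set of an induced path on [k] vertices in an
   [r]-regular graph on [n] vertices.  The degrees of the vertices of [S] add
   up to [k r].  Inside [S] they contribute exactly [2 (k - 1)], since the only
   edges among path vertices are the [k - 1] path edges; the remaining edges
   leave [S], and each of the [n - k] outside vertices absorbs at most [r] of
   them.  Hence [k r <= 2 (k - 1) + (n - k) r], which rearranges to the bound. *)

From mathcomp Require Import all_boot.
From mathcomp Require Import zify.

Set Implicit Arguments.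
Unset Strict Implicit.
Unset Printing Implicit Defensive.

Lemma sum_ord_eq (m k : nat) : \sum_(j < k) (j == m :> nat) = (m < k).
Proof. by rewrite -big_mkcond /= (big_ord1_eq _ (fun _ => 1)); case: (m < k). Qed.

Lemma sum_ord_succ_lt (k : nat) : \sum_(i < k) (i.+1 < k) = k.-1.
Proof.
case: k => [|k]; first by rewrite big_ord0.
rewrite big_ord_recr /= ltnn addn0.
rewrite (eq_bigr (fun _ => 1)); last by move=> i _; rewrite ltnS ltn_ord.
by rewrite sum_nat_const card_ord muln1.
Qed.

Lemma sum_ord_adjacent (k : nat) :
  \sum_(i < k) \sum_(j < k) ((i.+1 == j :> nat) || (j.+1 == i :> nat)) =
  2 * k.-1.
Proof.
have orb_add (i j : nat) : (i.+1 == j) || (j.+1 == i) = (i.+1 == j) + (j.+1 == i) :> nat.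
  by case: (i.+1 =P j) => [<-|//]; rewrite (gtn_eqF (leqnSn i.+1)).
under eq_bigr do under eq_bigr do rewrite orb_add.
under eq_bigr do rewrite big_split /=.
rewrite big_split /= [X in _ + X]exchange_big /=.
have succ_count (i : 'I_k) : \sum_(j < k) (i.+1 == j :> nat) = (i.+1 < k).
  by rewrite -sum_ord_eq; apply: eq_bigr => j _; rewrite eq_sym.
under eq_bigr do rewrite succ_count.
by rewrite sum_ord_succ_lt addnn mul2n.
Qed.

Section Graph.

Variables (T : finType) (e : rel T).

Lemma card_setI_sum (A B : {set T}) : #|A :&: B| = \sum_(w in B) (w \in A).
Proof.
rewrite -sum1_card big_mkcond [RHS]big_mkcond /=.
by apply: eq_bigr => w _; rewrite inE; case: (w \in A); case: (w \in B).
Qed.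

Lemma sum_seq_uniq (x0 : T) (s : seq T) (F : T -> nat) :
  uniq s -> \sum_(w in [set x in s]) F w = \sum_(i < size s) F (nth x0 s i).
Proof.
move=> s_uniq; rewrite (eq_bigl (mem s)) => [|w]; last by rewrite inE.
by rewrite -big_uniq // (big_nth x0) big_mkord.
Qed.

Lemma sum_neighbours_sym (A B : {set T}) : symmetric e ->
  \sum_(v in A) #|[set w | e v w] :&: B| = \sum_(w in B) #|[set v | e w v] :&: A|.
Proof.
move=> e_sym.
under eq_bigr do rewrite card_setI_sum.
under [RHS]eq_bigr do rewrite card_setI_sum.
rewrite exchange_big; apply: eq_bigr => w _; apply: eq_bigr => v _.
by rewrite !inE e_sym.
Qed.

Lemma sum_neighbours_induced_path (s : seq T) : induced_path e s ->
  \sum_(v in [set x in s]) #|[set w | e v w] :&: [set x in s]| =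
  2 * (size s).-1.
Proof.
case: s => [|x0 s'] [s_uniq s_adj]; first by rewrite big_pred0 // => v; rewrite inE.
set s := x0 :: s' in s_uniq s_adj *.
rewrite (sum_seq_uniq x0 _ s_uniq) -sum_ord_adjacent.
apply: eq_bigr => i _; rewrite card_setI_sum (sum_seq_uniq x0 _ s_uniq).
by apply: eq_bigr => j _; rewrite inE s_adj.
Qed.

Lemma sum_neighbours_outside_le (r : nat) (S : {set T}) :
  symmetric e -> regular e r ->
  \sum_(v in S) #|[set w | e v w] :\: S| <= #|~: S| * r.
Proof.
move=> e_sym e_reg.
under eq_bigr do rewrite setDE.
rewrite sum_neighbours_sym // -sum_nat_const leq_sum // => w _.
by rewrite -(e_reg w) subset_leq_card // subsetIl.
Qed.

End Graph.

Theorem corollary1 (T : finType) (e : rel T) (r k : nat) :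
  simple_graph e -> 0 < #|T| -> 2 <= r -> regular e r -> is_LIP e k ->
  k * (2 * r - 2) + 2 <= r * #|T|.
Proof.
move=> [e_sym _] n_gt0 r_ge2 e_reg [[s [s_path <-]] _].
set S := [set x in s].
have card_S : #|S| = size s by rewrite cardsE; apply/card_uniqP; case: s_path.
have degree_sum : \sum_(v in S) (#|[set w | e v w] :&: S| + #|[set w | e v w] :\: S|)
    = size s * r.
  under eq_bigr do rewrite cardsID e_reg.
  by rewrite sum_nat_const card_S.
rewrite big_split /= sum_neighbours_induced_path // in degree_sum.
have outside := sum_neighbours_outside_le S e_sym e_reg.
have := cardsC S; rewrite card_S; nia.
Qed.
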